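(* Let $k\ge1$ and let $\alpha_0,\dots,\alpha_k$, $\beta_0,\dots,\beta_{k-1}$ be real numbers with $\alpha_k=1$ and $|\alpha_0|+|\beta_0|>0$. Consider the explicit linear multistep method $\sum_{\sigma=0}^k\alpha_\sigma y_{n+\sigma}=\Delta t\sum_{\sigma=0}^{k-1}\beta_\sigma f_{n+\sigma}$ for $\dot y=f(y)$, with polynomials $\varrho(X)=\sum_{j=0}^k\alpha_jX^j$ and $\sigma(X)=\sum_{j=0}^{k-1}\beta_jX^j$. Assume the method is stable, i.e. every root of $\varrho$ has modulus $\le1$ and the roots of modulus $1$ are simple. Assume also that it is of order at least $1$, i.e. $\varrho(1)=0$ and $\varrho'(1)=\sigma(1)\neq0$. Then the stability region of the method contains no positive real number.
   Context: The stability region of the method is the set of $\mu\in\mathbb{C}$ such that every root $\zeta$ of the polynomial $\varrho(\zeta)-\mu\,\sigma(\zeta)$ satisfies $|\zeta|\le1$, and the roots with $|\zeta|=1$ are simple. Equivalently, it is the set of $\mu$ for which all solutions of $\sum_{\sigma=0}^k\alpha_\sigma x_{n+\sigma}=\mu\sum_{\sigma=0}^{k-1}\beta_\sigma x_{n+\sigma}$ are bounded. *)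

From HB Require Import structures.
From mathcomp Require Import all_boot all_order all_algebra.
From mathcomp Require Import complex.
Set Implicit Arguments. Unset Strict Implicit. Unset Printing Implicit Defensive.
Import Order.TTheory GRing.Theory Num.Theory.
Local Open Scope ring_scope.

Definition rho_poly (R : rcfType) (k : nat) (alpha : nat -> R) : {poly R} :=
  \poly_(j < k.+1) alpha j.
Definition sigma_poly (R : rcfType) (k : nat) (beta : nat -> R) : {poly R} :=
  \poly_(j < k) beta j.

Definition polyC_of (R : rcfType) (p : {poly R}) : {poly R[i]} :=
  map_poly (fun x : R => x%:C%C) p.

Definition root_condition (R : rcfType) (p : {poly R[i]}) : Prop :=
  forall z : R[i], root p z -> `|z| <= 1 /\ (`|z| = 1 -> mup z p = 1%N).

Definition stability_region (R : rcfType) (k : nat) (alpha beta : nat -> R)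
  (mu : R[i]) : Prop :=
  root_condition (polyC_of (rho_poly k alpha) - mu *: polyC_of (sigma_poly k beta)).

From HB Require Import structures.
From mathcomp Require Import all_boot all_order all_algebra.
From mathcomp Require Import complex polyrcf.
Import Order.TTheory GRing.Theory Num.Theory.
Local Open Scope ring_scope.

(* A real polynomial with positive leading coefficient which is negative at 1
   has, by the intermediate value theorem, a real root x > 1; the root
   condition forbids this.  Writing rho = (X - 1) q, with q monic and
   q(1) = rho'(1) = sigma(1), this forces sigma(1) > 0.  For mu > 0 the
   polynomial rho - mu sigma is then monic of degree k and takes the value
   -mu sigma(1) < 0 at 1, so mu violates the root condition. *)

Lemma horner_ge0_of_no_root_right {R : rcfType} (p : {poly R}) (a : R) :
  0 < lead_coef p -> (forall x, a < x -> ~~ root p x) -> 0 <= p.[a].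
Proof.
move=> lc_gt0 no_root; rewrite leNgt; apply/negP => pa_lt0.
have [b lc_le_pb] := poly_pinfty_gt_lc lc_gt0.
have a_le_max : a <= Num.max a b by rewrite le_max lexx.
have sign_change : p.[a] * p.[Num.max a b] < 0.
  by rewrite pmulr_llt0 // (lt_le_trans lc_gt0) // lc_le_pb // le_max lexx orbT.
have [x x_in rx] := poly_ivtoo a_le_max sign_change.
by move: rx; apply/negP/no_root; rewrite (itvP x_in).
Qed.

Lemma horner_polyC_of {R : rcfType} (p : {poly R}) (x : R) :
  (polyC_of p).[x%:C%C] = (p.[x])%:C%C.
Proof. exact: (horner_map (real_complex R)). Qed.

Lemma polyC_ofBZ {R : rcfType} (p q : {poly R}) (c : R) :
  polyC_of (p - c *: q) = polyC_of p - c%:C%C *: polyC_of q.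
Proof.
have polyC_ofE (r : {poly R}) : polyC_of r = map_poly (real_complex R) r by [].
by rewrite !polyC_ofE raddfB /= map_polyZ.
Qed.

Lemma root_condition_no_real_root_gt1 {R : rcfType} {p : {poly R}} {x : R} :
  root_condition (polyC_of p) -> 1 < x -> ~~ root p x.
Proof.
move=> cond x_gt1; apply/negP => rx.
have x_ge0 : 0 <= x by rewrite (le_trans ler01) ?ltW.
have /cond[] : root (polyC_of p) x%:C%C by rewrite /root horner_polyC_of (rootP rx).
by rewrite ger0_norm ?ler0c // -[1]/(1%:C%C) lecR leNgt x_gt1.
Qed.

Lemma root_condition_horner1_ge0 {R : rcfType} (p : {poly R}) :
  0 < lead_coef p -> root_condition (polyC_of p) -> 0 <= p.[1].
Proof.
move=> lc_gt0 cond; apply: horner_ge0_of_no_root_right => // x.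
exact: root_condition_no_real_root_gt1.
Qed.

Lemma horner_deriv_XsubCM {R : comNzRingType} (q : {poly R}) (a : R) :
  (('X - a%:P) * q)^`().[a] = q.[a].
Proof. by rewrite derivM derivXsubC mul1r !hornerE subrr mul0r addr0. Qed.

Lemma root_condition_deriv1_ge0 {R : rcfType} (p : {poly R}) :
  0 < lead_coef p -> root_condition (polyC_of p) -> p.[1] = 0 ->
  0 <= p^`().[1].
Proof.
move=> lc_gt0 cond /rootP/factor_theorem[q def_p].
rewrite def_p mulrC horner_deriv_XsubCM.
have lc_q : lead_coef q = lead_coef p by rewrite def_p lead_coefM lead_coefXsubC mulr1.
apply: horner_ge0_of_no_root_right => [|x x_gt1]; first by rewrite lc_q.
have := root_condition_no_real_root_gt1 cond x_gt1.
by rewrite def_p rootM negb_or => /andP[].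
Qed.

Theorem lemma2p4 (R : rcfType) (k : nat) (alpha beta : nat -> R) :
  (1 <= k)%N ->
  alpha k = 1 ->
  0 < `|alpha 0%N| + `|beta 0%N| ->
  (* stability of the method *)
  root_condition (polyC_of (rho_poly k alpha)) ->
  (* order at least 1 *)
  (rho_poly k alpha).[1] = 0 ->
  (rho_poly k alpha)^`().[1] = (sigma_poly k beta).[1] ->
  (sigma_poly k beta).[1] != 0 ->
  forall mu : R, 0 < mu -> ~ stability_region k alpha beta (mu%:C)%C.
Proof.
move=> _ alpha_k _ stable rho1 drho1 sigma1_neq0 mu mu_gt0.
set rho := rho_poly k alpha; set sigma := sigma_poly k beta.
have lc_rho : lead_coef rho = 1 by rewrite lead_coef_poly //= alpha_k oner_neq0.
have size_sigma : (size sigma < size rho)%N.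
  by rewrite [size rho]size_poly_eq ?alpha_k ?oner_neq0 // ltnS size_poly.
have sigma1_gt0 : 0 < sigma.[1].
  rewrite lt_def sigma1_neq0 -drho1 root_condition_deriv1_ge0 // lc_rho.
  exact: ltr01.
have lc_p : lead_coef (rho - mu *: sigma) = 1.
  by rewrite lead_coefDl ?lc_rho // size_polyN (leq_ltn_trans (size_scale_leq _ _)).
rewrite /stability_region -(polyC_ofBZ rho) => cond.
have : 0 <= (rho - mu *: sigma).[1].
  by apply: root_condition_horner1_ge0 cond; rewrite lc_p ltr01.
by rewrite hornerD hornerN hornerZ rho1 add0r oppr_ge0 leNgt mulr_gt0.
Qed.
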